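(* In the setting described in the context, the set $\{\ell_{xy}\mid x,y\in V\}$ spans the whole space $V^*$. Moreover, if $a\in V$ is such that either $\ell_{ax}=0$ for all $x\in V$ or $\ell_{xa}=0$ for all $x\in V$, then $a=0$.
   Context: Let $V$ be a $3$-dimensional vector space over a field $k$ and $\zeta\in GL(V)$. Write $xy$ for $x\otimes y$ in $T(V)$. Put $x\barwedge y=\zeta(x)y-\zeta(y)x$ and $x\barwedge y\barwedge z=\zeta^2(x)\zeta(y)z+\zeta^2(y)\zeta(z)x+\zeta^2(z)\zeta(x)y-\zeta^2(x)\zeta(z)y-\zeta^2(y)\zeta(x)z-\zeta^2(z)\zeta(y)x$. Let $I_2=\mathrm{span}\{x\barwedge y\}\subset V^{\otimes 2}$ and $\Upsilon^{(3)}=(I_2\otimes V)\cap(V\otimes I_2)=\mathrm{span}\{x\barwedge y\barwedge z\}$ (one-dimensional). Via the isomorphisms $\bigwedge^2V\cong I_2$, $x\wedge y\mapsto x\barwedge y$, and $\bigwedge^3V\cong\Upsilon^{(3)}$, $x\wedge y\wedge z\mapsto x\barwedge y\barwedge z$, there is a bilinear product $x\barwedge w\in\Upsilon^{(3)}$ for $x\in V$, $w\in I_2$, with $x\barwedge(y\barwedge z)=x\barwedge y\barwedge z$. Let $R$ be a Hecke symmetry on $V$ with parameter $q\neq0$ (braid equation and $(R-q\,\mathrm{Id})(R+\mathrm{Id})=0$) such that $\mathrm{Im}(R-q\,\mathrm{Id})=I_2$ (i.e. $\mathbb{S}(V,R)=T(V)/(I_2)$). Put $Y=q\,\mathrm{Id}-R$.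 Fix a nonzero alternating trilinear form $\omega$ on $V$, let $\tilde\omega:\Upsilon^{(3)}\to k$ be the linear map with $\tilde\omega(x\barwedge y\barwedge z)=\omega(x,y,z)$, and define $\ell_{xy}\in V^*$ by $\ell_{xy}(z)=\tilde\omega\big(x\barwedge Y(\zeta(y)z)\big)$. *)

From HB Require Import structures.
From mathcomp Require Import all_boot all_order all_algebra.
Set Implicit Arguments. Unset Strict Implicit. Unset Printing Implicit Defensive.
Import GRing.Theory.
Local Open Scope ring_scope.

(* Coordinates: V = k^3 as row vectors; a linear map zeta in GL(V) is an
   invertible 3x3 matrix acting by x |-> x *m zeta.
   V (x) V is modelled by 3x3 matrices, x (x) y = x^T *m y (entry (i,j) = x_i y_j). *)

Notation V k := 'rV[k]_3.
Notation T2 k := 'M[k]_3.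
Notation T3 k := {ffun 'I_3 * 'I_3 * 'I_3 -> k^o}.

Section Tensors.
Variable k : fieldType.
Local Notation V := (V k).
Local Notation T2 := (T2 k).
Local Notation T3 := (T3 k).

Definition zact (Z : 'M[k]_3) (x : V) : V := x *m Z.

Definition tensor2 (x y : V) : T2 := x^T *m y.
Definition tensor3 (x y z : V) : T3 :=
  [ffun p : 'I_3 * 'I_3 * 'I_3 => x 0 p.1.1 * y 0 p.1.2 * z 0 p.2].

Definition wedge2 (Z : 'M[k]_3) (x y : V) : T2 :=
  tensor2 (zact Z x) y - tensor2 (zact Z y) x.

Definition wedge3 (Z : 'M[k]_3) (x y z : V) : T3 :=
  let Z2 := zact Z \o zact Z in
  tensor3 (Z2 x) (zact Z y) z + tensor3 (Z2 y) (zact Z z) x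
  + tensor3 (Z2 z) (zact Z x) y - tensor3 (Z2 x) (zact Z z) y
  - tensor3 (Z2 y) (zact Z x) z - tensor3 (Z2 z) (zact Z y) x.

(* R (x) Id and Id (x) R on V^{(x)3}, for R a linear endomorphism of V (x) V *)
Definition slice12 (t : T3) (l : 'I_3) : T2 := \matrix_(i, j) t (i, j, l).
Definition slice23 (t : T3) (i : 'I_3) : T2 := \matrix_(j, l) t (i, j, l).
Definition R12 (R : T2 -> T2) (t : T3) : T3 :=
  [ffun p : 'I_3 * 'I_3 * 'I_3 => R (slice12 t p.2) p.1.1 p.1.2].
Definition R23 (R : T2 -> T2) (t : T3) : T3 :=
  [ffun p : 'I_3 * 'I_3 * 'I_3 => R (slice23 t p.1.1) p.1.2 p.2].

End Tensors.

Definition islin (k : fieldType) (U W : lmodType k) (f : U -> W) : Prop :=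
  forall (a : k) (u v : U), f (a *: u + v) = a *: f u + f v.
Definition islin_k (k : fieldType) (U : lmodType k) (f : U -> k) : Prop :=
  forall (a : k) (u v : U), f (a *: u + v) = a * f u + f v.

Definition in_span (k : fieldType) (U : lmodType k) (S : U -> Prop) (w : U) : Prop :=
  exists (n : nat) (c : 'I_n -> k) (v : 'I_n -> U),
    (forall i, S (v i)) /\ w = \sum_(i < n) c i *: v i.

Definition I2 (k : fieldType) (Z : 'M[k]_3) (w : T2 k) : Prop :=
  in_span (fun v : T2 k => exists x y, v = wedge2 Z x y) w.

Definition braid (k : fieldType) (R : T2 k -> T2 k) : Prop :=
  forall t : T3 k, R12 R (R23 R (R12 R t)) = R23 R (R12 R (R23 R t)).
Definition hecke (k : fieldType) (R : T2 k -> T2 k) (q : k) : Prop :=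
  forall w : T2 k, let u := R w + w in R u - q *: u = 0.

Definition trilinear (k : fieldType) (om : V k -> V k -> V k -> k) : Prop :=
  (forall y z, islin_k (fun x => om x y z)) /\
  (forall x z, islin_k (fun y => om x y z)) /\
  (forall x y, islin_k (fun z => om x y z)).
Definition alternating (k : fieldType) (om : V k -> V k -> V k -> k) : Prop :=
  (forall x z, om x x z = 0) /\ (forall x y, om x y y = 0) /\ (forall x y, om x y x = 0).

Definition Ymap (k : fieldType) (R : T2 k -> T2 k) (q : k) (w : T2 k) : T2 k :=
  q *: w - R w.

(* ell_{xy}(z) = omega~( x barwedge Y(zeta(y) z) ), where
   omt : T3 -> k is a linear functional extending omega~ on Upsilon^(3) and
   prd : V -> T2 -> T3 is a bilinear map extending the product x barwedge w (w in I_2). *)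
Definition ell (k : fieldType) (Z : 'M[k]_3) (R : T2 k -> T2 k) (q : k)
  (omt : T3 k -> k) (prd : V k -> T2 k -> T3 k) (x y z : V k) : k :=
  omt (prd x (Ymap R q (tensor2 (zact Z y) z))).

(* The pairing [x, w |-> omt (prd x w)] between [V] and [I_2] is nondegenerate:
   on generators it is [omega (x, y, z) = omega (e0, e1, e2) * det (x, y, z)], and
   [zeta^-1 (x) id] maps [I_2] into skew tensors.  Hence [ell_{xy} (z) = 0] for all [x]
   forces [Y (zeta y (x) z) = 0], i.e. [R = q] on [zeta y (x) z].  If this holds for
   all [y] and some [z <> 0] (or for all [z] and some [y <> 0]), the braid relation
   applied to [s (x) z] (resp. [u (x) s]) yields [R^2 = q R], so [R = q Id] by the
   Hecke relation and [I_2 = Im (R - q)] would vanish.  So the [ell_{xy}] have no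
   common zero and span [V^*], and [ell_{xa} = 0] for all [x] forces [a = 0].  If
   [ell_{ax} = 0] for all [x], then [omt (prd a (Y t)) = 0] for all [t]; as [Y] maps
   onto [I_2], [omega (a, y, z) = 0] for all [y], [z], so [a = 0]. *)

From HB Require Import structures.
From mathcomp Require Import all_boot all_order all_algebra.
From mathcomp Require Import ring.
Set Implicit Arguments. Unset Strict Implicit.
Import GRing.Theory.
Local Open Scope ring_scope.

Local Notation "''e_' i" := (@delta_mx _ 1 _ 0 i)
  (at level 8, i at level 2, format "''e_' i").

Section Linearity.
Variable k : fieldType.
Implicit Types U W X : lmodType k.

Lemma islin0 U W (f : U -> W) : islin f -> f 0 = 0.
Proof.
move=> fL; apply: (@addrI _ (f 0)); have := fL 1 0 0.
by rewrite !scale1r !addr0.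
Qed.

Lemma islinD U W (f : U -> W) : islin f -> forall u v, f (u + v) = f u + f v.
Proof. by move=> fL u v; have := fL 1 u v; rewrite !scale1r. Qed.

Lemma islinZ U W (f : U -> W) : islin f -> forall a u, f (a *: u) = a *: f u.
Proof. by move=> fL a u; rewrite -[a *: u]addr0 fL islin0 // addr0. Qed.

Lemma islinN U W (f : U -> W) : islin f -> forall u, f (- u) = - f u.
Proof. by move=> fL u; rewrite -scaleN1r islinZ // scaleN1r. Qed.

Lemma islin_sum U W (f : U -> W) : islin f -> forall I (r : seq I) (P : pred I) F,
  f (\sum_(i <- r | P i) F i) = \sum_(i <- r | P i) f (F i).
Proof. by move=> fL I r P F; apply: (big_morph f (islinD fL) (islin0 fL)). Qed.

(* Holds by conversion: scaling in the regular module [k^o] is multiplication. *)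
Lemma islin_kW U (f : U -> k) : islin_k f -> @islin k U k^o f.
Proof. by []. Qed.

Lemma islin_kD U (f : U -> k) : islin_k f -> forall u v, f (u + v) = f u + f v.
Proof. by move=> /islin_kW fL u v; exact: islinD fL u v. Qed.

Lemma islin_kZ U (f : U -> k) : islin_k f -> forall a u, f (a *: u) = a * f u.
Proof. by move=> /islin_kW fL a u; exact: islinZ fL a u. Qed.

Lemma islin_k_sum U (f : U -> k) : islin_k f -> forall I (r : seq I) (P : pred I) F,
  f (\sum_(i <- r | P i) F i) = \sum_(i <- r | P i) f (F i).
Proof. by move=> /islin_kW fL; exact: islin_sum fL. Qed.

Lemma islin_comp U W X (f : U -> W) (g : W -> X) :
  islin f -> islin g -> islin (g \o f).
Proof. by move=> fL gL a u v /=; rewrite fL gL. Qed.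

Lemma islin_k_comp U W (f : U -> W) (g : W -> k) :
  islin f -> islin_k g -> islin_k (g \o f).
Proof. by move=> fL gL a u v /=; rewrite fL gL. Qed.

Lemma eq_on_span U (S : U -> Prop) (f g : U -> k) w :
  islin_k f -> islin_k g -> (forall v, S v -> f v = g v) -> in_span S w -> f w = g w.
Proof.
move=> fL gL fgS [n [c [v [Sv ->]]]].
rewrite (islin_k_sum fL) (islin_k_sum gL); apply: eq_bigr => i _.
by rewrite (islin_kZ fL) (islin_kZ gL) fgS.
Qed.

End Linearity.

Section Coordinates.
Variable k : fieldType.

Lemma islin_k_row n (f : 'rV[k]_n -> k) : islin_k f ->
  forall x, f x = \sum_j x 0 j * f 'e_j.
Proof.
move=> fL x; rewrite {1}(row_sum_delta x) (islin_k_sum fL).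
by apply: eq_bigr => j _; rewrite (islin_kZ fL).
Qed.

Lemma islin_k_row_eq0 n (f : 'rV[k]_n -> k) : islin_k f ->
  (forall j, f 'e_j = 0) -> forall x, f x = 0.
Proof. by move=> fL f0 x; rewrite (islin_k_row fL) big1 // => j _; rewrite f0 mulr0. Qed.

Lemma dual_span_of_separating n m (L : 'I_m -> 'rV[k]_n -> k) :
  (forall i, islin_k (L i)) -> (forall z, (forall i, L i z = 0) -> z = 0) ->
  forall f, islin_k f -> exists c : 'I_m -> k, forall z, f z = \sum_i c i * L i z.
Proof.
move=> LL Lsep f fL.
pose M := \matrix_(j, i) L i 'e_j.
have ML z : z *m M = \row_i L i z.
  apply/rowP => i; rewrite !mxE (islin_k_row (LL i)).
  by apply: eq_bigr => j _; rewrite mxE.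
have Mfree : row_free M.
  apply: inj_row_free => z; rewrite ML => /rowP z0.
  by apply: Lsep => i; have := z0 i; rewrite !mxE.
pose fcol := \col_j f 'e_j.
exists (fun i => (pinvmx M *m fcol) i 0) => z.
have -> : f z = (z *m M *m (pinvmx M *m fcol)) 0 0.
  rewrite mulmxA -(mulmxA z) mulmxVp // mulmx1 mxE (islin_k_row fL).
  by apply: eq_bigr => j _; rewrite mxE.
by rewrite ML mxE; apply: eq_bigr => i _; rewrite mxE mulrC.
Qed.

Definition i0 : 'I_3 := @Ordinal 3 0 isT.
Definition i1 : 'I_3 := @Ordinal 3 1 isT.
Definition i2 : 'I_3 := @Ordinal 3 2 isT.

Lemma ord3P (i : 'I_3) : [\/ i = i0, i = i1 | i = i2].
Proof.
by case: i => [[|[|[|//]]] ?]; [apply: Or31 | apply: Or32 | apply: Or33]; apply: val_inj.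
Qed.

Definition ord3E := (eqxx, (erefl : (i0 == i1) = false), (erefl : (i0 == i2) = false),
  (erefl : (i1 == i0) = false), (erefl : (i1 == i2) = false),
  (erefl : (i2 == i0) = false), (erefl : (i2 == i1) = false)).

Lemma row3E (x : V k) : x = x 0 i0 *: 'e_i0 + x 0 i1 *: 'e_i1 + x 0 i2 *: 'e_i2.
Proof. by apply/rowP => j; rewrite !mxE; case: (ord3P j) => ->; rewrite !ord3E /=; ring. Qed.

Lemma islin_k_row3 (f : V k -> k) : islin_k f ->
  forall x, f x = x 0 i0 * f 'e_i0 + x 0 i1 * f 'e_i1 + x 0 i2 * f 'e_i2.
Proof. by move=> fL x; rewrite {1}(row3E x) !(islin_kD fL) !(islin_kZ fL). Qed.

Lemma tensor2E (x y : V k) i j : tensor2 x y i j = x 0 i * y 0 j.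
Proof. by rewrite /tensor2 mxE big_ord1 mxE. Qed.

Lemma tensor2_skewE (y z : V k) i j :
  (tensor2 y z - tensor2 z y) i j = y 0 i * z 0 j - z 0 i * y 0 j.
Proof. by rewrite /tensor2 !mxE !big_ord1 !mxE. Qed.

Lemma tensor2_islinl (y : V k) : islin (fun x => tensor2 x y).
Proof. by move=> a u v; rewrite /tensor2 linearD linearZ /= mulmxDl scalemxAl. Qed.

Lemma tensor2_islinr (x : V k) : islin (tensor2 x).
Proof. by move=> a u v; rewrite /tensor2 mulmxDr scalemxAr. Qed.

Lemma tensor2_delta (i j : 'I_3) : tensor2 'e_i 'e_j = delta_mx i j :> T2 k.
Proof.
apply/matrixP => a b; rewrite tensor2E !mxE !eqxx /= -natrM mulnb.
by rewrite [a == i]eq_sym [b == j]eq_sym.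
Qed.

Lemma islin_k_tensor2_eq0 (f : T2 k -> k) : islin_k f ->
  (forall x y, f (tensor2 x y) = 0) -> forall s, f s = 0.
Proof.
move=> fL f0 s; rewrite (matrix_sum_delta s) (islin_k_sum fL) big1 // => i _.
by rewrite (islin_k_sum fL) big1 // => j _; rewrite (islin_kZ fL) -tensor2_delta f0 mulr0.
Qed.

End Coordinates.

Lemma row_neq0P (k : fieldType) n (z : 'rV[k]_n) : z != 0 -> exists j, z 0 j != 0.
Proof.
move=> nz; apply/existsP; apply: contraNT nz; rewrite negb_exists => /forallP z0.
by apply/eqP/rowP => j; rewrite mxE; apply/eqP; have := z0 j; rewrite negbK.
Qed.

Section TensorCubes.
Variable k : fieldType.

Definition tensor21 (s : T2 k) (z : V k) : T3 k := [ffun p => s p.1.1 p.1.2 * z 0 p.2].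
Definition tensor12 (u : V k) (s : T2 k) : T3 k := [ffun p => u 0 p.1.1 * s p.1.2 p.2].

Lemma tensor21_inj z : z != 0 -> injective (tensor21^~ z).
Proof.
move=> /row_neq0P[l zl] s s' /ffunP ss'; apply/matrixP => i j.
by have := ss' (i, j, l); rewrite !ffunE; apply: mulIf.
Qed.

Lemma tensor12_inj u : u != 0 -> injective (tensor12 u).
Proof.
move=> /row_neq0P[l ul] s s' /ffunP ss'; apply/matrixP => i j.
by have := ss' (l, i, j); rewrite !ffunE; apply: mulfI.
Qed.

Variable R : T2 k -> T2 k.
Hypothesis RL : islin R.

Lemma R12_tensor21 s z : R12 R (tensor21 s z) = tensor21 (R s) z.
Proof.
apply/ffunP => p; rewrite !ffunE.
have -> : slice12 (tensor21 s z) p.2 = z 0 p.2 *: s.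
  by apply/matrixP => i j; rewrite !mxE ffunE mulrC.
by rewrite (islinZ RL) mxE mulrC.
Qed.

Lemma R23_tensor12 u s : R23 R (tensor12 u s) = tensor12 u (R s).
Proof.
apply/ffunP => p; rewrite !ffunE.
have -> : slice23 (tensor12 u s) p.1.1 = u 0 p.1.1 *: s.
  by apply/matrixP => i j; rewrite !mxE ffunE.
by rewrite (islinZ RL) mxE.
Qed.

Variable q : k.

Lemma R23_tensor21 s z : (forall u, R (tensor2 u z) = q *: tensor2 u z) ->
  R23 R (tensor21 s z) = tensor21 (q *: s) z.
Proof.
move=> Rz; apply/ffunP => p; rewrite !ffunE.
have -> : slice23 (tensor21 s z) p.1.1 = tensor2 (row p.1.1 s) z.
  by apply/matrixP => i j; rewrite tensor2E !mxE ffunE /=.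
by rewrite Rz [LHS]mxE tensor2E !mxE mulrA.
Qed.

Lemma R12_tensor12 u s : (forall v, R (tensor2 u v) = q *: tensor2 u v) ->
  R12 R (tensor12 u s) = tensor12 u (q *: s).
Proof.
move=> Ru; apply/ffunP => p; rewrite !ffunE.
have -> : slice12 (tensor12 u s) p.2 = tensor2 u (col p.2 s)^T.
  by apply/matrixP => i j; rewrite tensor2E !mxE ffunE /=.
by rewrite Ru [LHS]mxE tensor2E !mxE mulrCA.
Qed.

Hypotheses (Rbraid : braid R) (q_neq0 : q != 0).

(* Apply the braid relation to [s (x) z], resp. [u (x) s]: on such tensors both
   sides reduce to [R] acting on the [T2] factor only. *)
Lemma RR_eq_qR_of_right_eigen z : z != 0 -> (forall u, R (tensor2 u z) = q *: tensor2 u z) ->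
  forall s, R (R s) = q *: R s.
Proof.
move=> nz Rz s; apply: (scalerI q_neq0); apply: (tensor21_inj nz).
have := Rbraid (tensor21 s z).
by rewrite !(R12_tensor21, R23_tensor21 _ Rz) !(islinZ RL).
Qed.

Lemma RR_eq_qR_of_left_eigen u : u != 0 -> (forall v, R (tensor2 u v) = q *: tensor2 u v) ->
  forall s, R (R s) = q *: R s.
Proof.
move=> nu Ru s; apply: (scalerI q_neq0); apply: (tensor12_inj nu).
have := Rbraid (tensor12 u s).
by rewrite !(R12_tensor12 _ Ru, R23_tensor12) !(islinZ RL).
Qed.

End TensorCubes.

Lemma I2_wedge2 (k : fieldType) (Z : 'M[k]_3) x y : I2 Z (wedge2 Z x y).
Proof.
exists 1%N, (fun=> 1), (fun=> wedge2 Z x y); split; last by rewrite big_ord1 scale1r.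
by move=> _; exists x, y.
Qed.

Lemma wedge2_neq0 (k : fieldType) (Z : 'M[k]_3) : Z \in unitmx -> wedge2 Z 'e_i0 'e_i1 != 0.
Proof.
move=> Z_unit; apply/negP => /eqP/matrixP w0.
have eZ0 : 'e_i0 *m Z = 0 :> V k.
  apply/rowP => a; have := w0 a i1.
  by rewrite /wedge2 !mxE !big_ord1 !mxE !ord3E /= mulr1 mulr0 subr0.
have := congr1 (mulmx^~ (invmx Z)) eZ0; rewrite mulmxK // mul0mx => /rowP/(_ i0).
by rewrite !mxE eqxx => /eqP; rewrite oner_eq0.
Qed.

Lemma Ymap_islin (k : fieldType) (R : T2 k -> T2 k) q : islin R -> islin (Ymap R q).
Proof. by move=> RL a u v; apply/matrixP => i j; rewrite /Ymap RL !mxE; ring. Qed.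

Section Hecke.
Variables (k : fieldType) (Z : 'M[k]_3) (R : T2 k -> T2 k) (q : k).
Hypotheses (Z_unit : Z \in unitmx) (RL : islin R) (Rbraid : braid R)
  (Rhecke : hecke R q) (q_neq0 : q != 0)
  (ImR : forall w, (exists u, w = R u - q *: u) <-> I2 Z w).

Lemma I2_Ymap w : I2 Z (Ymap R q w).
Proof. by apply/ImR; exists (- w); rewrite /Ymap (islinN RL) scalerN opprK addrC. Qed.

Lemma I2_Ymap_surj w : I2 Z w -> exists u, w = Ymap R q u.
Proof. by move/ImR => [u ->]; exists (- u); rewrite /Ymap (islinN RL) scalerN opprK addrC. Qed.

Lemma Ymap_eq0 t : Ymap R q t = 0 -> R t = q *: t.
Proof. by move/eqP; rewrite subr_eq0 eq_sym => /eqP. Qed.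

Lemma not_RR_eq_qR : ~ (forall s, R (R s) = q *: R s).
Proof.
move=> RR; have R_scalar w : R w = q *: w.
  apply/eqP; rewrite -subr_eq0; apply/eqP.
  by have := Rhecke w; rewrite /= (islinD RL) RR scalerDr opprD addrACA subrr add0r.
have /ImR[u] := I2_wedge2 Z 'e_i0 'e_i1.
by rewrite R_scalar subrr; apply/eqP; exact: wedge2_neq0.
Qed.

Lemma Ymap_right_kernel z : (forall u, Ymap R q (tensor2 u z) = 0) -> z = 0.
Proof.
move=> Yz; apply/eqP/contraT => nz; case: not_RR_eq_qR.
by apply: (RR_eq_qR_of_right_eigen RL Rbraid q_neq0 nz) => u; apply: Ymap_eq0.
Qed.

Lemma Ymap_left_kernel u : (forall v, Ymap R q (tensor2 u v) = 0) -> u = 0.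
Proof.
move=> Yu; apply/eqP/contraT => nu; case: not_RR_eq_qR.
by apply: (RR_eq_qR_of_left_eigen RL Rbraid q_neq0 nu) => v; apply: Ymap_eq0.
Qed.

End Hecke.

Section Volume.
Variable k : fieldType.

(* For [A = y (x) z - z (x) y] this is the determinant with rows [x], [y], [z]. *)
Definition vol3 (x : V k) (A : T2 k) : k :=
  x 0 i0 * A i1 i2 - x 0 i1 * A i0 i2 + x 0 i2 * A i0 i1.

Lemma vol3_islinr x : islin_k (vol3 x).
Proof. by move=> a A B; rewrite /vol3 !mxE; ring. Qed.

Lemma vol3_basis (A : T2 k) :
  [/\ vol3 'e_i0 A = A i1 i2, vol3 'e_i1 A = - A i0 i2 & vol3 'e_i2 A = A i0 i1].
Proof. by rewrite /vol3 !mxE !ord3E /=; split; ring. Qed.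

Lemma skew_vol3_eq0 (A : T2 k) : (forall i, A i i = 0) -> (forall i j, A j i = - A i j) ->
  (forall l, vol3 'e_l A = 0) -> A = 0.
Proof.
move=> Adiag Askew Avol; have [] := vol3_basis A.
rewrite !Avol => /esym A12 /esym/eqP; rewrite oppr_eq0 => /eqP A02 /esym A01.
apply/matrixP => i j; rewrite mxE.
case: (ord3P i) => ->; case: (ord3P j) => ->; rewrite ?Adiag ?A12 ?A02 ?A01 //.
all: by rewrite Askew ?A12 ?A02 ?A01 oppr0.
Qed.

Variable om : V k -> V k -> V k -> k.
Hypotheses (om_tri : trilinear om) (om_alt : alternating om).

Lemma om_swap12 x y z : om y x z = - om x y z.
Proof.
have [L1 [L2 _]] := om_tri; have [A1 _] := om_alt.
apply/eqP; rewrite -addr_eq0 addrC; apply/eqP.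
by have := A1 (x + y) z; rewrite (islin_kD (L1 _ _)) !(islin_kD (L2 _ _)) !A1 add0r addr0.
Qed.

Lemma om_swap23 x y z : om x z y = - om x y z.
Proof.
have [_ [L2 L3]] := om_tri; have [_ [A2 _]] := om_alt.
apply/eqP; rewrite -addr_eq0 addrC; apply/eqP.
by have := A2 x (y + z); rewrite (islin_kD (L2 _ _)) !(islin_kD (L3 _ _)) !A2 add0r addr0.
Qed.

Lemma om_vol3 x y z :
  om x y z = om 'e_i0 'e_i1 'e_i2 * vol3 x (tensor2 y z - tensor2 z y).
Proof.
have [L1 [L2 L3]] := om_tri; have [A1 [A2 A3]] := om_alt.
rewrite (islin_k_row3 (L1 y z) x) !(islin_k_row3 (L2 _ z) y) !(islin_k_row3 (L3 _ _) z).
rewrite !A1 !A2 !A3.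
set c := om 'e_i0 'e_i1 'e_i2.
have -> : om 'e_i0 'e_i2 'e_i1 = - c by rewrite om_swap23.
have -> : om 'e_i1 'e_i0 'e_i2 = - c by rewrite om_swap12.
have -> : om 'e_i1 'e_i2 'e_i0 = c by rewrite om_swap23 om_swap12 opprK.
have -> : om 'e_i2 'e_i0 'e_i1 = c by rewrite om_swap12 om_swap23 opprK.
have -> : om 'e_i2 'e_i1 'e_i0 = - c by rewrite om_swap23 om_swap12 om_swap23 opprK.
by rewrite /vol3 !tensor2_skewE; ring.
Qed.

Lemma om_basis_neq0 : (exists x y z, om x y z != 0) -> om 'e_i0 'e_i1 'e_i2 != 0.
Proof. by case=> x [y [z]]; apply: contraNneq => om0; rewrite om_vol3 om0 mul0r. Qed.

Lemma om_nondeg a : om 'e_i0 'e_i1 'e_i2 != 0 -> (forall y z, om a y z = 0) -> a = 0.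
Proof.
move=> om_neq0 om_a; apply/rowP => j.
have vol0 y z : vol3 a (tensor2 y z - tensor2 z y) = 0.
  by apply/eqP; rewrite -(mulrI_eq0 _ (lregP om_neq0)) -om_vol3 om_a.
have := vol0 'e_i1 'e_i2; have := vol0 'e_i0 'e_i2; have := vol0 'e_i0 'e_i1.
rewrite /vol3 !tensor2_skewE !mxE !ord3E /=.
rewrite !(mulr0, mul0r, mulr1, subr0, sub0r, addr0, add0r, subrr, oppr0, mulrN1).
by move=> a2 /eqP; rewrite oppr_eq0 => /eqP a1 a0; case: (ord3P j) => ->.
Qed.

End Volume.

Section Pairing.
Variables (k : fieldType) (Z : 'M[k]_3) (om : V k -> V k -> V k -> k)
  (omt : T3 k -> k) (prd : V k -> T2 k -> T3 k).
Hypotheses (Z_unit : Z \in unitmx) (om_tri : trilinear om) (om_alt : alternating om)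
  (omt_lin : islin_k omt) (omt_wedge3 : forall x y z, omt (wedge3 Z x y z) = om x y z)
  (prd_linr : forall x, islin (prd x))
  (prd_wedge2 : forall x y z, prd x (wedge2 Z y z) = wedge3 Z x y z).

(* [zeta^-1 (x) id] on [V (x) V] *)
Definition unzeta1 (w : T2 k) : T2 k := (invmx Z)^T *m w.

Lemma unzeta1K w : Z^T *m unzeta1 w = w.
Proof. by rewrite mulmxA -trmx_mul mulVmx // trmx1 mul1mx. Qed.

Lemma unzeta1_wedge2 y z : unzeta1 (wedge2 Z y z) = tensor2 y z - tensor2 z y.
Proof.
rewrite /unzeta1 /wedge2 /zact /tensor2 mulmxBr !trmx_mul !mulmxA -!trmx_mul.
by rewrite mulmxV // !mulmx1.
Qed.

Lemma unzeta1_entry_islin i j : islin_k (fun w => unzeta1 w i j).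
Proof. by move=> a u v; rewrite /unzeta1 mulmxDr -scalemxAr !mxE. Qed.

Lemma I2_unzeta1_diag w : I2 Z w -> forall i, unzeta1 w i i = 0.
Proof.
move=> w_I2 i.
apply: (eq_on_span (f := fun w => unzeta1 w i i) (g := fun=> 0)) w_I2 => [||_ [y [z ->]]].
- exact: unzeta1_entry_islin.
- by move=> a u v; rewrite mulr0 addr0.
- by rewrite unzeta1_wedge2 tensor2_skewE mulrC subrr.
Qed.

Lemma I2_unzeta1_skew w : I2 Z w -> forall i j, unzeta1 w j i = - unzeta1 w i j.
Proof.
move=> w_I2 i j; apply/eqP; rewrite -addr_eq0; apply/eqP.
apply: (eq_on_span (f := fun w => unzeta1 w j i + unzeta1 w i j) (g := fun=> 0)) w_I2
  => [||_ [y [z ->]]].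
- by move=> a u v; rewrite !(unzeta1_entry_islin i j, unzeta1_entry_islin j i); ring.
- by move=> a u v; rewrite mulr0 addr0.
- by rewrite unzeta1_wedge2 !tensor2_skewE; ring.
Qed.

Lemma I2_pairing w : I2 Z w ->
  forall x, omt (prd x w) = om 'e_i0 'e_i1 'e_i2 * vol3 x (unzeta1 w).
Proof.
move=> w_I2 x; apply: (eq_on_span (f := fun w => omt (prd x w))
  (g := fun w => om 'e_i0 'e_i1 'e_i2 * vol3 x (unzeta1 w))) w_I2.
- exact: islin_k_comp (prd_linr x) omt_lin.
- by move=> a u v; rewrite /unzeta1 mulmxDr -scalemxAr (vol3_islinr x); ring.
- move=> _ [y [z ->]].
  by rewrite prd_wedge2 omt_wedge3 unzeta1_wedge2 (om_vol3 om_tri om_alt).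
Qed.

Lemma I2_pairing_nondeg w : om 'e_i0 'e_i1 'e_i2 != 0 -> I2 Z w ->
  (forall l, omt (prd 'e_l w) = 0) -> w = 0.
Proof.
move=> om_neq0 w_I2 w0; rewrite -(unzeta1K w).
suff -> : unzeta1 w = 0 by rewrite mulmx0.
apply: skew_vol3_eq0; [exact: I2_unzeta1_diag | exact: I2_unzeta1_skew |] => l.
by apply/eqP; rewrite -(mulrI_eq0 _ (lregP om_neq0)) -I2_pairing // w0.
Qed.

End Pairing.

Section Ell.
Variables (k : fieldType) (Z : 'M[k]_3) (R : T2 k -> T2 k) (q : k)
  (om : V k -> V k -> V k -> k) (omt : T3 k -> k) (prd : V k -> T2 k -> T3 k).
Hypotheses (Z_unit : Z \in unitmx) (q_neq0 : q != 0)
  (RL : islin R) (Rbraid : braid R) (Rhecke : hecke R q)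
  (ImR : forall w, (exists u, w = R u - q *: u) <-> I2 Z w)
  (om_tri : trilinear om) (om_alt : alternating om) (om_neq0 : om 'e_i0 'e_i1 'e_i2 != 0)
  (omt_lin : islin_k omt) (omt_wedge3 : forall x y z, omt (wedge3 Z x y z) = om x y z)
  (prd_linr : forall x, islin (prd x))
  (prd_wedge2 : forall x y z, prd x (wedge2 Z y z) = wedge3 Z x y z).

Local Notation ell := (ell Z R q omt prd).

Lemma ell_islinr x y : islin_k (ell x y).
Proof.
apply: islin_k_comp omt_lin; apply: islin_comp (prd_linr x).
exact: islin_comp (tensor2_islinr _) (Ymap_islin q RL).
Qed.

Lemma ell_islinm x z : islin_k (fun y => ell x y z).
Proof.
apply: islin_k_comp omt_lin; apply: islin_comp (prd_linr x).
apply: islin_comp (Ymap_islin q RL); apply: islin_comp (tensor2_islinl z).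
by move=> a u v; rewrite /zact mulmxDl scalemxAl.
Qed.

Lemma ell_basis_eq0 y z : (forall l, ell 'e_l y z = 0) -> Ymap R q (tensor2 (y *m Z) z) = 0.
Proof.
move=> ell0; apply: (I2_pairing_nondeg Z_unit om_tri om_alt omt_lin omt_wedge3 prd_linr
  prd_wedge2 om_neq0) => //.
exact: I2_Ymap.
Qed.

Lemma ell_separating z : (forall a b, ell 'e_a 'e_b z = 0) -> z = 0.
Proof.
move=> ell0; apply: (Ymap_right_kernel Z_unit RL Rbraid Rhecke q_neq0 ImR) => u.
rewrite -[u](mulmxKV Z_unit); apply: ell_basis_eq0 => l.
by apply: islin_k_row_eq0 (ell_islinm 'e_l z) _ _ => b; apply: ell0.
Qed.

Lemma ell_left_nondeg a : (forall x z, ell a x z = 0) -> a = 0.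
Proof.
move=> ell0; apply: (om_nondeg om_tri om_alt) => // y z.
rewrite -omt_wedge3 -prd_wedge2.
have [s ->] := I2_Ymap_surj RL ImR (I2_wedge2 Z y z).
apply: (islin_k_tensor2_eq0 (f := fun s => omt (prd a (Ymap R q s)))) => [|x z'].
  exact: islin_k_comp (islin_comp (Ymap_islin q RL) (prd_linr a)) omt_lin.
by have := ell0 (x *m invmx Z) z'; rewrite /ell /zact mulmxKV.
Qed.

Lemma ell_mid_nondeg a : (forall x z, ell x a z = 0) -> a = 0.
Proof.
move=> ell0; apply: (can_inj (mulmxK Z_unit)); rewrite mul0mx.
apply: (Ymap_left_kernel Z_unit RL Rbraid Rhecke q_neq0 ImR) => z.
by apply: ell_basis_eq0 => l; apply: ell0.
Qed.

End Ell.

Unset Implicit Arguments.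

Theorem lemma2p4 (k : fieldType) (Z : 'M[k]_3) (R : T2 k -> T2 k) (q : k)
  (omega : V k -> V k -> V k -> k) (omt : T3 k -> k) (prd : V k -> T2 k -> T3 k) :
  Z \in unitmx ->
  q != 0 ->
  islin R -> braid R -> hecke R q ->
  (forall w : T2 k, (exists u, w = R u - q *: u) <-> I2 Z w) ->
  trilinear omega -> alternating omega -> (exists x y z, omega x y z != 0) ->
  islin_k omt -> (forall x y z, omt (wedge3 Z x y z) = omega x y z) ->
  (forall x, islin (prd x)) -> (forall w, islin (fun x => prd x w)) ->
  (forall x y z, prd x (wedge2 Z y z) = wedge3 Z x y z) ->
  (forall f : V k -> k, islin_k f ->
     exists (n : nat) (c : 'I_n -> k) (xs ys : 'I_n -> V k),
       forall z, f z = \sum_(i < n) c i * ell Z R q omt prd (xs i) (ys i) z)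
  /\
  (forall a : V k,
     ((forall x z, ell Z R q omt prd a x z = 0) \/
      (forall x z, ell Z R q omt prd x a z = 0)) -> a = 0).
Proof.
move=> Z_unit q_neq0 RL Rbraid Rhecke ImR om_tri om_alt om_ex omt_lin omt_wedge3
  prd_linr _ prd_wedge2.
have om_neq0 := om_basis_neq0 om_tri om_alt om_ex.
split=> [f fL | a [ell0 | ell0]]; last 2 first.
- exact: (ell_left_nondeg Z_unit RL ImR om_tri om_alt om_neq0 omt_lin omt_wedge3
    prd_linr prd_wedge2).
- exact: (ell_mid_nondeg Z_unit q_neq0 RL Rbraid Rhecke ImR om_tri om_alt om_neq0
    omt_lin omt_wedge3 prd_linr prd_wedge2).
pose pair : 'I_#|{: 'I_3 * 'I_3}| -> 'I_3 * 'I_3 := enum_val.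
have [||c fE] := @dual_span_of_separating _ _ _
  (fun i => ell Z R q omt prd 'e_(pair i).1 'e_(pair i).2) _ _ f fL.
- by move=> i; apply: ell_islinr.
- move=> z ell0; apply: (ell_separating Z_unit q_neq0 RL Rbraid Rhecke ImR om_tri om_alt
    om_neq0 omt_lin omt_wedge3 prd_linr prd_wedge2) => a b.
  by have := ell0 (enum_rank (a, b)); rewrite /pair enum_rankK.
by exists #|{: 'I_3 * 'I_3}|, c, (fun i => 'e_(pair i).1), (fun i => 'e_(pair i).2).
Qed.
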